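(* Let $p\in(0,1)$. Then $L^\infty(\mathbb R^n)\cap\mathcal L^{\Phi_p}(\mathbb R^n)=L^\infty(\mathbb R^n)\cap\mathcal L^{\Phi_p}_{\rm loc}(\mathbb R^n)$; equivalently, $L^\infty(\mathbb R^n)\cap(H^{\Phi_p}(\mathbb R^n))^*=L^\infty(\mathbb R^n)\cap(h^{\Phi_p}(\mathbb R^n))^*$.
   Context: $\Phi_p(\tau):=\tau/(1+\tau^{1-p})$; $\|f\|_{L^{\Phi_p}}:=\inf\{\lambda>0:\int\Phi_p(|f|/\lambda)\le1\}$; $d:=\lfloor n(1/p-1)\rfloor$. For $g\in L^1_{\rm loc}$ and a ball $B$, $P_B^dg$ is the unique polynomial $P$ of degree $\le d$ with $\int_B(g-P)R=0$ for all polynomials $R$ of degree $\le d$. The Orlicz Campanato space $\mathcal L^{\Phi_p}(\mathbb R^n)$ is the set of $g\in L^1_{\rm loc}$ with $\sup_{B}\|\mathbf 1_B\|_{L^{\Phi_p}}^{-1}\int_B|g-P_B^dg|<\infty$ (sup over all balls); it is the dual of the Orlicz Hardy space $H^{\Phi_p}(\mathbb R^n)$. The local Orlicz Campanato space $\mathcal L^{\Phi_p}_{\rm loc}(\mathbb R^n)$ is the set of $g\in L^1_{\rm loc}$ with $\sup_{|B|<1}\|\mathbf 1_B\|_{L^{\Phi_p}}^{-1}\int_B|g-P_B^dg|+\sup_{|B|\ge1}\|\mathbf 1_B\|_{L^{\Phi_p}}^{-1}\int_B|g|<\infty$; it is the dual of the local Orlicz Hardy space $h^{\Phi_p}(\mathbb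 R^n)$. *)

From HB Require Import structures.
From mathcomp Require Import all_boot all_order all_algebra.
From mathcomp Require Import all_classical all_reals all_analysis.
Set Implicit Arguments. Unset Strict Implicit. Unset Printing Implicit Defensive.
Import Order.TTheory GRing.Theory Num.Theory.
Import numFieldNormedType.Exports.
Local Open Scope classical_set_scope.
Local Open Scope ring_scope.

Section OrliczCampanato.
Variable R : realType.

(* R^n is 'rV[R]_n; coordinate i of y is y ord0 i. *)

Definition vcons (m : nat) (x : R) (v : 'rV[R]_m) : 'rV[R]_m.+1 :=
  \row_(i < m.+1) match unlift ord0 i with None => x | Some j => v ord0 j end.

(* Lebesgue integral over R^n of a nonnegative function, defined as the
   iterated one-dimensional Lebesgue integral (equal to the n-dimensional
   Lebesgue integral for nonnegative Borel functions, by Tonelli). *)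
Fixpoint intRn (n : nat) : ('rV[R]_n -> \bar R) -> \bar R :=
  match n with
  | 0 => fun f => f 0
  | m.+1 => fun f =>
      (\int[lebesgue_measure]_x intRn (fun v : 'rV[R]_m => f (vcons x v)))%E
  end.

Definition sintRn (n : nat) (f : 'rV[R]_n -> R) : \bar R :=
  (intRn (fun y => (Num.max (f y) 0)%:E) - intRn (fun y => (Num.max (- f y) 0)%:E))%E.

Definition lebRn (n : nat) (A : set 'rV[R]_n) : \bar R :=
  intRn (fun y => (\1_A y)%:E).

Definition borel_fun (n : nat) (g : 'rV[R]_n -> R) : Prop :=
  forall U : set R, open U -> <<s [set A : set 'rV[R]_n | open A] >> (g @^-1` U).

Definition ballE (n : nat) (x : 'rV[R]_n) (r : R) : set 'rV[R]_n :=
  [set y | \sum_(i < n) (y ord0 i - x ord0 i) ^+ 2 < r ^+ 2].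

Definition is_ball (n : nat) (B : set 'rV[R]_n) : Prop :=
  exists x r, 0 < r /\ B = ballE x r.

Definition L1loc (n : nat) (g : 'rV[R]_n -> R) : Prop :=
  borel_fun g /\
  forall x r, 0 < r -> (intRn (fun y => (\1_(ballE x r) y * `|g y|)%:E) < +oo)%E.

Definition Linfty (n : nat) (g : 'rV[R]_n -> R) : Prop :=
  borel_fun g /\ exists M : R, lebRn [set y | M < `|g y|] = 0%E.

Definition Phi (p tau : R) : R := tau / (1 + tau `^ (1 - p)).

Definition orlicz_norm (p : R) (n : nat) (f : 'rV[R]_n -> R) : R :=
  inf [set lam : R | 0 < lam /\
                     (intRn (fun y => (Phi p (`|f y| / lam))%:E) <= 1)%E].

Definition polyRn (n d : nat) (P : 'rV[R]_n -> R) : Prop :=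
  exists c : {ffun {ffun 'I_n -> 'I_d.+1} -> R},
    forall y, P y = \sum_(a : {ffun 'I_n -> 'I_d.+1} | (\sum_(i < n) (a i : nat) <= d)%N)
                      c a * \prod_(i < n) (y ord0 i) ^+ (a i).

Definition is_projB (n d : nat) (B : set 'rV[R]_n) (g P : 'rV[R]_n -> R) : Prop :=
  polyRn d P /\
  forall Q, polyRn d Q -> sintRn (fun y => \1_B y * (g y - P y) * Q y) = 0%E.

Definition PBd (n d : nat) (B : set 'rV[R]_n) (g : 'rV[R]_n -> R) : 'rV[R]_n -> R :=
  xget (fun _ => 0) [set P | is_projB d B g P].

Definition dp (n : nat) (p : R) : nat := Num.truncn (n%:R * (p^-1 - 1)).

Definition Campanato (p : R) (n : nat) (g : 'rV[R]_n -> R) : Prop :=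
  L1loc g /\
  exists C : R, forall B : set 'rV[R]_n, is_ball B ->
    (intRn (fun y => (\1_B y * `|g y - PBd (dp n p) B g y|)%:E)
      <= (C * orlicz_norm p (\1_B))%:E)%E.

Definition Campanato_loc (p : R) (n : nat) (g : 'rV[R]_n -> R) : Prop :=
  L1loc g /\
  exists C : R,
    (forall B : set 'rV[R]_n, is_ball B -> (lebRn B < 1)%E ->
      (intRn (fun y => (\1_B y * `|g y - PBd (dp n p) B g y|)%:E)
        <= (C * orlicz_norm p (\1_B))%:E)%E) /\
    (forall B : set 'rV[R]_n, is_ball B -> (1 <= lebRn B)%E ->
      (intRn (fun y => (\1_B y * `|g y|)%:E)
        <= (C * orlicz_norm p (\1_B))%:E)%E).

End OrliczCampanato.

From Pilot Require Import Defs.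
From HB Require Import structures.
From mathcomp Require Import all_boot all_order all_algebra.
From mathcomp Require Import all_classical all_reals all_analysis.
From mathcomp Require Import measurable_realfun lra.
Set Implicit Arguments. Unset Strict Implicit. Unset Printing Implicit Defensive.
Import Order.TTheory GRing.Theory Num.Theory.
Import numFieldNormedType.Exports.
Local Open Scope classical_set_scope.
Local Open Scope ring_scope.

(* The two Campanato conditions agree on balls of measure < 1, so only balls B
   with |B| >= 1 matter.  For those, both the local condition int_B |g| and
   the global condition int_B |g - P_B^d g| are O(||1_B||_{L^Phi_p}) whenever
   |g| <= M a.e., because
   - int_B |g| <= M |B|;
   - P = P_B^d g is orthogonal to g - P on B, so int_B P^2 = int_B g P, and
     with 4 M |P| <= P^2 + 4 M^2 this gives int_B |P| <= 2 M |B|, hence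
     int_B |g - P| <= 3 M |B|;
   - ||1_B||_{L^Phi_p} >= kappa |B| for |B| >= 1, by the elementary bounds
     Phi_p(t) >= t/2 on [0,1] and Phi_p(t) >= max(1, t^p)/2 beyond. *)

(* The library's sigma-finiteness instance for [m1 \x m2] is shadowed by the
   subprobability one, so we name the product of two sigma-finite measures
   and record that it is sigma-finite: rectangles built from exhausting
   sequences of finite-measure sets exhaust the product space. *)
Section sigma_finite_product.
Local Open Scope ereal_scope.
Context d1 d2 (T1 : measurableType d1) (T2 : measurableType d2) (R : realType).
Variables (m1 : {sigma_finite_measure set T1 -> \bar R})
          (m2 : {sigma_finite_measure set T2 -> \bar R}).

Definition prod_measure := m1 \x m2.
HB.instance Definition _ := Measure.copy prod_measure (m1 \x m2).

Lemma prod_measure_sigma_finite : sigma_finite setT prod_measure.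
Proof.
have /sigma_finiteP[F [UF ndF fF]] := sigma_finiteT m1.
have /sigma_finiteP[G [UG ndG fG]] := sigma_finiteT m2.
exists (fun n => F n `*` G n); last first.
  move=> n; have [mF Fn] := fF n; have [mG Gn] := fG n.
  split; first exact: measurableX.
  rewrite /prod_measure product_measure1E //.
  by rewrite lte_mul_pinfty // ge0_fin_numE.
apply/seteqP; split => [[x y] _|[x y] [n _ [Fx Gy]]] //.
have [[i _ Fix] [j _ Gjy]] : (\bigcup_n F n) x /\ (\bigcup_n G n) y.
  by rewrite -UF -UG.
exists (maxn i j) => //; split.
- by move: x Fix; apply/subsetPset/ndF/leq_maxl.
- by move: y Gjy; apply/subsetPset/ndG/leq_maxr.
Qed.

HB.instance Definition _ :=
  Measure_isSigmaFinite.Build _ _ _ prod_measure prod_measure_sigma_finite.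
End sigma_finite_product.

Section euclidean_space.
Variable R : realType.

(* R^(k+1) as the iterated measurable product R * (R * ... R), carrying the
   iterated product of Lebesgue measures [lambda k], and the map [to_rV k]
   identifying it with row vectors, first coordinate first (as in [vcons]). *)
Fixpoint prodR_display (k : nat) : measure_display :=
  match k with
  | 0 => R.-ocitv.-measurable.-sigma
  | k.+1 => (R.-ocitv.-measurable.-sigma, prodR_display k).-prod%mdisp
  end.

Fixpoint prodR (k : nat) : measurableType (prodR_display k) :=
  match k return measurableType (prodR_display k) with
  | 0 => measurableTypeR R
  | k.+1 => (measurableTypeR R * prodR k)%type
  end.

Fixpoint lambda (k : nat) : {sigma_finite_measure set prodR k -> \bar R} :=
  match k return {sigma_finite_measure set prodR k -> \bar R} with
  | 0 => @lebesgue_measure R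
  | k.+1 => prod_measure (@lebesgue_measure R) (lambda k)
  end.

Fixpoint to_rV (k : nat) : prodR k -> 'rV[R]_k.+1 :=
  match k return prodR k -> 'rV[R]_k.+1 with
  | 0 => fun x => vcons x 0
  | k.+1 => fun t => vcons t.1 (to_rV t.2)
  end.

Lemma vcons0 m (x : R) (v : 'rV[R]_m) : vcons x v ord0 ord0 = x.
Proof. by rewrite /vcons mxE unlift_none. Qed.

Lemma vconsS m (x : R) (v : 'rV[R]_m) j : vcons x v ord0 (lift ord0 j) = v ord0 j.
Proof. by rewrite /vcons mxE liftK. Qed.

(* Tonelli's theorem, iterated: the iterated integral [intRn] of a nonnegative
   function is its integral against the product measure [lambda k]. *)
Lemma intRn_lambda k (f : 'rV[R]_k.+1 -> \bar R) :
  measurable_fun [set: prodR k] (fun t => f (to_rV t)) -> (forall y, 0 <= f y)%E ->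
  intRn f = (\int[lambda k]_t f (to_rV t))%E.
Proof.
elim: k f => [//|k IH] f mf f0.
rewrite [LHS]/= (eq_integral (fun x => \int[lambda k]_t f (@to_rV k.+1 (x, t))))%E.
  exact/esym/(fubini_tonelli1 (fun z => f (@to_rV k.+1 z))).
move=> x _; apply: (IH (fun v => f (vcons x v))) => //.
exact: (measurableT_comp mf (pair1_measurable x)).
Qed.

Lemma to_rV_coord_measurable k (i : 'I_k.+1) :
  measurable_fun [set: prodR k] (fun t => @to_rV k t ord0 i).
Proof.
elim: k i => [|k IH] i.
  by rewrite (ord1 i); under eq_fun do rewrite vcons0; exact: measurable_id.
have [j ->|->] := unliftP ord0 i.
  under eq_fun do rewrite vconsS.
  exact: measurableT_comp (IH j) measurable_snd.
by under eq_fun do rewrite vcons0; exact: measurable_fst.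
Qed.

End euclidean_space.

Section cubes.
Variable R : realType.
Local Notation to_rV k := (@to_rV R k).
Local Notation lambda := (@lambda R).

Lemma measurable_sublevel d (T : measurableType d) (h : T -> R) (r : R) :
  measurable_fun [set: T] h -> measurable [set t | h t < r].
Proof.
move=> mh; have := mh measurableT `]-oo, r[%classic (measurable_itv _).
by rewrite setTI /preimage; under eq_set do rewrite /= in_itv.
Qed.

Lemma measurable_superlevel d (T : measurableType d) (h : T -> R) (r : R) :
  measurable_fun [set: T] h -> measurable [set t | r < h t].
Proof.
move=> mh; have := mh measurableT `]r, +oo[%classic (measurable_itv _).
by rewrite setTI /preimage; under eq_set do rewrite /= in_itv andbT.
Qed.

Definition cube n (c : 'rV[R]_n) (r : R) : set 'rV[R]_n :=
  [set y | forall j, `|y ord0 j - c ord0 j| < r].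

Definition rtail n (c : 'rV[R]_n.+1) : 'rV[R]_n := \row_j c ord0 (lift ord0 j).

Lemma cube_vcons n (c : 'rV[R]_n.+1) r x v :
  cube c r (vcons x v) <-> `|x - c ord0 ord0| < r /\ cube (rtail c) r v.
Proof.
split => [H|[Hx Hv] j].
  split; first by have := H ord0; rewrite vcons0.
  by move=> j; have := H (lift ord0 j); rewrite vconsS mxE.
by have [j' ->|->] := unliftP ord0 j; rewrite ?vconsS ?vcons0 //; have := Hv j'; rewrite mxE.
Qed.

Lemma cube_measurable k (c : 'rV[R]_k.+1) r : measurable (to_rV k @^-1` cube c r).
Proof.
rewrite (_ : _ @^-1` _ = \bigcap_(j in [set: 'I_k.+1])
                          [set t | `|to_rV k t ord0 j - c ord0 j| < r]).
  apply: fin_bigcap_measurable => [|j _]; first exact: finite_finset.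
  apply/measurable_sublevel/measurableT_comp => //.
  exact/measurable_funB/measurable_cst/to_rV_coord_measurable.
by apply/seteqP; split => t H j //=; exact: H.
Qed.

(* Cubes have finite Lebesgue measure: a cube of R^(k+2) is an interval
   times a cube of R^(k+1). *)
Lemma cube_finite k (c : 'rV[R]_k.+1) r : (lambda k (to_rV k @^-1` cube c r) < +oo)%E.
Proof.
have itv_fin (a b : R) : (lambda 0 `]a, b[%classic < +oo)%E.
  by rewrite /= lebesgue_measure_itv; case: ifP => _; rewrite ?ltry.
elim: k c => [|k IH] c.
  rewrite (_ : _ @^-1` _ = `]c ord0 ord0 - r, c ord0 ord0 + r[%classic) //.
  apply/seteqP; split => x /=; rewrite in_itv /=.
    by move=> /cube_vcons[+ _]; rewrite ltr_norml => /andP[? ?]; apply/andP; split; lra.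
  move=> /andP[? ?]; apply/cube_vcons; split => [|[]//].
  by rewrite ltr_norml; apply/andP; split; lra.
rewrite (_ : _ @^-1` _ = `]c ord0 ord0 - r, c ord0 ord0 + r[%classic `*`
                         (to_rV k @^-1` cube (rtail c) r)); last first.
  apply/seteqP; split => -[x t] /=; rewrite in_itv /=.
    move=> /cube_vcons[+ ?]; rewrite ltr_norml => /andP[? ?].
    by split => //; apply/andP; split; lra.
  move=> [/andP[? ?] ?]; apply/cube_vcons; split => //.
  by rewrite ltr_norml; apply/andP; split; lra.
rewrite /= /prod_measure product_measure1E //; last exact: cube_measurable.
rewrite lte_mul_pinfty // ?measure_ge0 // ge0_fin_numE ?measure_ge0 //.
exact: itv_fin.
Qed.

End cubes.

Section borel.
Variable R : realType.
Local Notation to_rV k := (@to_rV R k).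

Lemma open_cube_nbhs n (U : set 'rV[R]_n) y :
  open U -> U y -> exists2 e, 0 < e & cube y e `<=` U.
Proof.
move=> oU Uy; have /nbhs_ballP[e /= e0 eU] := oU y Uy.
exists e => // z zc; apply: eU; split => // i j; rewrite (ord1 i).
by rewrite /ball /= distrC; exact: zc.
Qed.

Definition ratcube n (qs : 'rV[rat]_n * rat) : set 'rV[R]_n :=
  cube (map_mx ratr qs.1) (ratr qs.2).

Lemma open_ratcube n (U : set 'rV[R]_n) y : open U -> U y ->
  exists2 qs, ratcube qs `<=` U & ratcube qs y.
Proof.
move=> oU Uy; have [e e0 eU] := open_cube_nbhs oU Uy.
have [s] : exists s : rat, ratr s \in `]0, e / 2[ by apply: rat_in_itvoo; lra.
rewrite in_itv /= => /andP[s0 se].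
have near_q (j : 'I_n) : exists q : rat, `|y ord0 j - ratr q| < ratr s.
  have [q] : exists q : rat, ratr q \in `]y ord0 j - ratr s, y ord0 j + ratr s[.
    by apply: rat_in_itvoo; lra.
  by rewrite in_itv /= => /andP[? ?]; exists q; rewrite ltr_norml; apply/andP; split; lra.
have [q qP] := choice near_q.
exists (\row_j q j, s) => [z zq|j]; last by rewrite /= !mxE; exact: qP.
apply: eU => j; have := zq j; have := qP j; rewrite /= !mxE distrC.
have := ler_distD (ratr (q j)) (z ord0 j) (y ord0 j); lra.
Qed.

(* Hence an open set is the countable union of the rational cubes it
   contains, and its preimage is measurable. *)
Lemma open_preimage_measurable k (U : set 'rV[R]_k.+1) :
  open U -> measurable (to_rV k @^-1` U).
Proof.
move=> oU; rewrite (_ : U = \bigcup_(qs in [set qs | ratcube qs `<=` U]) ratcube qs).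
  rewrite preimage_bigcup bigcup_mkcond.
  apply: countable_bigcupT_measurable => [|qs]; first exact: countableP.
  by case: ifP => _; [exact: cube_measurable|exact: measurable0].
apply/seteqP; split => [y Uy|y [qs qsU /qsU] //].
by have [qs qsU qsy] := open_ratcube oU Uy; exists qs.
Qed.

(* Preimages of Borel sets under [to_rV k] are measurable, since such
   preimages form a sigma-algebra containing the open sets. *)
Lemma borel_preimage_measurable k (A : set 'rV[R]_k.+1) :
  <<s [set B : set 'rV[R]_k.+1 | open B] >> A -> measurable (to_rV k @^-1` A).
Proof.
have sa : sigma_algebra [set: 'rV[R]_k.+1]
    (image_set_system [set: prodR R k] (to_rV k) measurable).
  exact: sigma_algebra_image (sigma_algebra_measurable (prodR R k)).
move=> /(smallest_sub sa); rewrite /image_set_system /= setTI; apply.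
by move=> B oB; rewrite /= setTI; exact: open_preimage_measurable.
Qed.

Lemma borel_fun_measurable k (g : 'rV[R]_k.+1 -> R) : borel_fun g ->
  measurable_fun [set: prodR R k] (fun t => g (to_rV k t)).
Proof.
move=> bg; apply: (measurability _ (RGenInftyO.measurableE R)).
move=> _ [_ [x ->] <-]; rewrite setTI.
apply: (@borel_preimage_measurable _ (g @^-1` `]-oo, x[%classic)).
by apply: bg; exact: interval_open.
Qed.

End borel.

Section balls_polynomials.
Variable R : realType.
Local Notation to_rV k := (@to_rV R k).
Local Notation lambda := (@lambda R).

Lemma intRn_lambdaR k (h : 'rV[R]_k.+1 -> R) :
  measurable_fun [set: prodR R k] (fun t => h (to_rV k t)) -> (forall y, 0 <= h y) ->
  intRn (fun y => (h y)%:E) = (\int[lambda k]_t (h (to_rV k t))%:E)%E.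
Proof. by move=> mh h0; rewrite intRn_lambda //; exact/measurable_EFinP. Qed.

Lemma indic_measurable k (A : set 'rV[R]_k.+1) : measurable (to_rV k @^-1` A) ->
  measurable_fun [set: prodR R k] (fun t => \1_A (to_rV k t) : R).
Proof.
by move=> mA; rewrite (_ : (fun t => _) = \1_(to_rV k @^-1` A)).
Qed.

Lemma lebRn_lambda k (A : set 'rV[R]_k.+1) : measurable (to_rV k @^-1` A) ->
  lebRn A = lambda k (to_rV k @^-1` A).
Proof.
move=> mA; rewrite /lebRn intRn_lambdaR; last 2 first.
- exact: indic_measurable.
- by move=> y; rewrite indicE.
by rewrite -[X in _ = lambda k X]setIT -integral_indic.
Qed.

Lemma ball_sub_cube n (x : 'rV[R]_n) r : 0 < r -> Defs.ballE x r `<=` cube x r.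
Proof.
move=> r0 y /= yB j; rewrite -(ltr_pXn2r (n := 2)) ?nnegrE ?normr_ge0 ?ltW //.
rewrite real_normK ?num_real //; apply: le_lt_trans yB.
rewrite (bigD1 j) //= lerDl; apply: sumr_ge0 => i _; exact: sqr_ge0.
Qed.

Lemma ball_measurable k (x : 'rV[R]_k.+1) r : measurable (to_rV k @^-1` Defs.ballE x r).
Proof.
apply: measurable_sublevel; apply: measurable_sum => i.
apply/measurable_funX/measurable_funB/measurable_cst.
exact: to_rV_coord_measurable.
Qed.

(* Balls have finite Lebesgue measure, being contained in cubes. *)
Lemma ball_finite k (x : 'rV[R]_k.+1) r : 0 < r ->
  exists m : R, lebRn (Defs.ballE x r) = m%:E.
Proof.
move=> r0; rewrite lebRn_lambda; last exact: ball_measurable.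
exists (fine (lambda k (to_rV k @^-1` Defs.ballE x r))).
rewrite fineK // ge0_fin_numE ?measure_ge0 //; apply: le_lt_trans (cube_finite x r).
apply: le_measure; rewrite ?inE; [exact: ball_measurable|exact: cube_measurable|].
by move=> t; exact: ball_sub_cube.
Qed.

Lemma poly_measurable k d (P : 'rV[R]_k.+1 -> R) : polyRn d P ->
  measurable_fun [set: prodR R k] (fun t => P (to_rV k t)).
Proof.
move=> [c Pc]; rewrite (funext (fun t => Pc (to_rV k t))).
under eq_fun do rewrite -big_filter.
apply: measurable_sum => a.
apply/measurable_funM/measurable_prod => [|i _]; first exact: measurable_cst.
exact/measurable_funX/to_rV_coord_measurable.
Qed.

Lemma poly_bounded_cube n d (P : 'rV[R]_n -> R) (x : 'rV[R]_n) r :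
  polyRn d P -> exists2 K, 0 <= K & forall y, cube x r y -> `|P y| <= K.
Proof.
move=> [c Pc].
exists (\sum_(a : {ffun 'I_n -> 'I_d.+1} | (\sum_(i < n) (a i : nat) <= d)%N)
          `|c a| * \prod_(i < n) (`|x ord0 i| + `|r|) ^+ a i) => [|y yc].
  by apply: sumr_ge0 => a _; apply/mulr_ge0/prodr_ge0 => // i _; exact: exprn_ge0.
rewrite Pc; apply: le_trans (ler_norm_sum _ _ _) _; apply: ler_sum => a _.
rewrite normrM ler_wpM2l // normr_prod; apply: ler_prod => i _.
rewrite normrX exprn_ge0 //=; apply: lerXn2r; rewrite ?nnegrE ?addr_ge0 //.
have := ler_distD (x ord0 i) (y ord0 i) 0; rewrite !subr0.
have := yc i; have := ler_norm r; lra.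
Qed.

End balls_polynomials.

Section orlicz_function.
Variable R : realType.
Variable p : R.
Hypotheses (p0 : 0 < p) (p1 : p < 1).

Lemma Phi0 : Phi p 0 = 0.
Proof. by rewrite /Phi mul0r. Qed.

Lemma Phi_ge0 t : 0 <= t -> 0 <= Phi p t.
Proof. by move=> t0; rewrite /Phi divr_ge0 // addr_ge0 // powR_ge0. Qed.

Lemma Phi_le t : 0 <= t -> Phi p t <= t.
Proof.
move=> t0; have tb0 := mulr_ge0 t0 (powR_ge0 t (1 - p)).
by rewrite /Phi ler_pdivrMr ?ltr_wpDr ?powR_ge0 // mulrDr mulr1; lra.
Qed.

Lemma Phi_lb_small t : 0 <= t <= 1 -> t / 2 <= Phi p t.
Proof.
move=> /andP[t0 t1]; have tp1 : t `^ (1 - p) <= 1.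
  have [->|tn0] := eqVneq t 0; first by rewrite powR0 // subr_eq0 gt_eqF.
  rewrite -[leRHS](powRr0 t); apply: ger_powR; last by rewrite subr_ge0 ltW.
  by rewrite lt_neqAle eq_sym tn0 t0.
have : t / 2 * (1 + t `^ (1 - p)) <= t / 2 * 2 by rewrite ler_wpM2l //; lra.
by rewrite /Phi ler_pdivlMr ?ltr_wpDr ?powR_ge0 //; lra.
Qed.

Lemma Phi_lb_large t : 1 <= t -> 1 / 2 <= Phi p t /\ t `^ p / 2 <= Phi p t.
Proof.
move=> t1; have t0 : 0 <= t by lra.
have tp1 : 1 <= t `^ (1 - p).
  by rewrite -[leLHS](powRr0 t); apply: ler_powR => //; rewrite subr_ge0 ltW.
have tpt : t `^ (1 - p) <= t by apply: ler1_powR => //; rewrite gerBl ltW.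
have tE : t = t `^ p * t `^ (1 - p).
  by rewrite -powRD addrC subrK ?powRr1 ?oner_eq0.
have := ler_wpM2l (powR_ge0 t p) tp1; rewrite mulr1 => tpb.
split; rewrite /Phi ler_pdivlMr ?ltr_wpDr ?powR_ge0 //; first lra.
by rewrite [X in _ <= X]tE; clear -tpb; nra.
Qed.

(* The constant kappa = 1 / (2 * 2^(1/p)) of the lower bound
   ||1_B||_{L^Phi_p} >= kappa |B| for |B| >= 1. *)
Definition orlicz_kappa : R := (2 * 2 `^ p^-1)^-1.

Let two_root_ge1 : 1 <= 2 `^ p^-1.
Proof. by rewrite -[leLHS](powRr0 2); apply: ler_powR; rewrite ?ler1n // invr_ge0 ltW. Qed.

Lemma orlicz_kappa_gt0 : 0 < orlicz_kappa.
Proof. by rewrite invr_gt0 mulr_gt0 // powR_gt0. Qed.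

(* If the modular of 1_B at level 1/t is at most 1, with |B| = m >= 1, then
   1/t >= kappa m: the Luxemburg norm of 1_B is at least kappa m. *)
Lemma Phi_modular_lb m t : 1 <= m -> 0 < t -> Phi p t * m <= 1 ->
  orlicz_kappa * m <= t^-1.
Proof.
move=> m1 t0 Hm; have m0 : 0 <= m by lra.
have [t1|t1] := leP t 1.
  have /Phi_lb_small Hs : 0 <= t <= 1 by rewrite ltW.
  have := le_trans (ler_wpM2r m0 Hs) Hm => Htm.
  have kle : orlicz_kappa <= 1 / 2.
    by rewrite /orlicz_kappa invfM div1r ler_piMr ?invr_ge0 // invf_le1 ?powR_gt0.
  apply: le_trans (ler_wpM2r m0 kle) _.
  by rewrite -[t^-1]div1r ler_pdivlMr //; lra.
have [H1 Hp] := Phi_lb_large (ltW t1).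
have := le_trans (ler_wpM2r m0 H1) Hm => Hm2.
have := le_trans (ler_wpM2r m0 Hp) Hm => Htp.
have tp : t `^ p <= 2.
  have := ler_wpM2l (divr_ge0 (powR_ge0 t p) (ler0n _ 2)) m1; lra.
have tle : t <= 2 `^ p^-1.
  rewrite leNgt; apply/negP => lt2t.
  have : (2 `^ p^-1) `^ p < t `^ p.
    by apply: gt0_ltr_powR; rewrite ?nnegrE ?powR_ge0 ?ltW.
  by rewrite -powRrM mulVf ?gt_eqF // powRr1 //; lra.
have kE : orlicz_kappa * 2 = (2 `^ p^-1)^-1.
  by rewrite /orlicz_kappa invfM mulrAC mulVf ?mul1r.
apply: (@le_trans _ _ (orlicz_kappa * 2)).
  by apply: ler_wpM2l; [exact: ltW orlicz_kappa_gt0|lra].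
by rewrite kE lef_pV2 ?posrE //; lra.
Qed.

End orlicz_function.

(* Pointwise inequalities behind the L^1 bound for the projection, written
   with h = b (G - Q) Q: the positive part of h is at most M b |Q|, and
   4 M b |Q| <= b Q^2 + 4 M^2 b <= M b |Q| + (-h)^+ + 4 M^2 b. *)
Lemma proj_pos_part_le (R : realType) (M b g q : R) : 0 <= M -> 0 <= b ->
  `|g| <= M -> Num.max (b * (g - q) * q) 0 <= M * (b * `|q|).
Proof.
move=> M0 b0 gM; rewrite ge_max mulr_ge0 ?mulr_ge0 // andbT.
have gq : g * q <= M * `|q| by apply: le_trans (ler_norm _) _; rewrite normrM ler_wpM2r.
have := ler_wpM2l b0 gq; have := mulr_ge0 b0 (sqr_ge0 q); lra.
Qed.

Lemma proj_amgm_le (R : realType) (M b g q : R) : 0 <= b -> `|g| <= M ->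
  4 * M * (b * `|q|) <= M * (b * `|q|) + Num.max (- (b * (g - q) * q)) 0 + 4 * M ^+ 2 * b.
Proof.
move=> b0 gM.
have gq : g * q <= M * `|q| by apply: le_trans (ler_norm _) _; rewrite normrM ler_wpM2r.
have amgm : 4 * M * `|q| <= q ^+ 2 + 4 * M ^+ 2.
  by have := sqr_ge0 (`|q| - 2 * M); rewrite -(real_normK (num_real q)); nra.
have := ler_wpM2l b0 gq; have := ler_wpM2l b0 amgm.
have : - (b * (g - q) * q) <= Num.max (- (b * (g - q) * q)) 0 by rewrite le_max lexx.
lra.
Qed.

Lemma fin_sube_eq0 (R : realType) (x y : \bar R) : x \is a fin_num -> (0 <= y)%E ->
  (x - y = 0)%E -> y = x.
Proof.
move=> /fineK <-; case: y => [c _| _ |//] /=; last by [].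
by move/eqP; rewrite -EFinB eqe subr_eq0 => /eqP ->.
Qed.

(* Estimates for weighted integrals in an abstract measure space: b >= 0 is a
   weight (later the indicator of a ball) and G is bounded by M outside the
   null set N (later an L^infty function). *)
Section weighted_integrals.
Local Open Scope ereal_scope.
Context d (T : measurableType d) (R : realType) (mu : {measure set T -> \bar R}).
Variables (M : R) (N : set T) (b G : T -> R).
Hypotheses (M0 : (0 < M)%R) (mN : measurable N) (N0 : mu N = 0)
  (mb : measurable_fun setT b) (b0 : forall t, (0 <= b t)%R)
  (mG : measurable_fun setT G) (GM : forall t, ~ N t -> (`|G t| <= M)%R).

Let integralD_ge0 (u v : T -> R) :
  measurable_fun setT u -> measurable_fun setT v ->
  (forall t, 0 <= u t)%R -> (forall t, 0 <= v t)%R ->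
  \int[mu]_t (u t + v t)%:E = \int[mu]_t (u t)%:E + \int[mu]_t (v t)%:E.
Proof.
move=> mu_ mv u0 v0; under eq_integral do rewrite EFinD.
by apply: ge0_integralD => //; by [move=> t _; rewrite lee_fin|exact/measurable_EFinP].
Qed.

Let integralZ_ge0 (c : R) (u : T -> R) : (0 <= c)%R ->
  measurable_fun setT u -> (forall t, 0 <= u t)%R ->
  \int[mu]_t (c * u t)%:E = c%:E * \int[mu]_t (u t)%:E.
Proof.
move=> c0 mu_ u0; under eq_integral do rewrite EFinM.
by apply: ge0_integralZl_EFin => //; by [move=> t _; rewrite lee_fin|exact/measurable_EFinP].
Qed.

Let le_integral_ae (u v : T -> R) :
  measurable_fun setT u -> measurable_fun setT v ->
  (forall t, 0 <= u t)%R -> (forall t, 0 <= v t)%R ->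
  (forall t, ~ N t -> u t <= v t)%R ->
  \int[mu]_t (u t)%:E <= \int[mu]_t (v t)%:E.
Proof.
move=> mu_ mv u0 v0 uv; apply: ae_ge0_le_integral => //;
  try by [move=> t _; rewrite lee_fin|exact/measurable_EFinP].
exists N; split => // t /= nle; apply: contrapT => Nt; apply: nle => _.
by rewrite lee_fin uv.
Qed.

Lemma weighted_integral_bounded :
  \int[mu]_t (b t * `|G t|)%:E <= M%:E * \int[mu]_t (b t)%:E.
Proof.
rewrite -(integralZ_ge0 (ltW M0) mb b0); apply: le_integral_ae => //.
- exact/measurable_funM/measurableT_comp.
- exact/measurable_funM/mb/measurable_cst.
- by move=> t; rewrite mulr_ge0.
- by move=> t; rewrite mulr_ge0 // ltW.
- by move=> t /GM ?; rewrite mulrC; apply: ler_wpM2r.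
Qed.

(* From now on Q is orthogonal to G - Q in L^2(b mu), as P_B^d g is to
   g - P_B^d g on B; orthogonality is stated, as for [sintRn], as the
   vanishing of the difference of the integrals of the two parts of
   h = b (G - Q) Q. *)
Section orthogonal_function.
Variable Q : T -> R.
Hypotheses (mQ : measurable_fun setT Q)
  (bQfin : \int[mu]_t (b t * `|Q t|)%:E < +oo)
  (orth : \int[mu]_t (Num.max (b t * (G t - Q t) * Q t) 0)%:E -
          \int[mu]_t (Num.max (- (b t * (G t - Q t) * Q t)) 0)%:E = 0).

Let mh : measurable_fun setT (fun t => b t * (G t - Q t) * Q t)%R.
Proof. exact/measurable_funM/mQ/measurable_funM/measurable_funB. Qed.

Let mbQ : measurable_fun setT (fun t => b t * `|Q t|)%R.
Proof. exact/measurable_funM/measurableT_comp. Qed.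

Let bQ0 t : (0 <= b t * `|Q t|)%R. Proof. by rewrite mulr_ge0. Qed.

Let max0_ge0 (x : R) : (0 <= Num.max x 0)%R. Proof. by rewrite le_max lexx orbT. Qed.

Let positive_part_bound :
  \int[mu]_t (Num.max (b t * (G t - Q t) * Q t) 0)%:E
    <= M%:E * \int[mu]_t (b t * `|Q t|)%:E.
Proof.
rewrite -(integralZ_ge0 (ltW M0) mbQ bQ0); apply: le_integral_ae => //.
- exact/measurable_maxr/measurable_cst.
- exact/measurable_funM/mbQ/measurable_cst.
- by move=> t; rewrite mulr_ge0 // ltW.
by move=> t /GM; apply: proj_pos_part_le => //; exact: ltW.
Qed.

Let amgm_bound :
  (4 * M)%:E * \int[mu]_t (b t * `|Q t|)%:E <=
    M%:E * \int[mu]_t (b t * `|Q t|)%:E +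
    \int[mu]_t (Num.max (- (b t * (G t - Q t) * Q t)) 0)%:E +
    (4 * M ^+ 2)%:E * \int[mu]_t (b t)%:E.
Proof.
have M20 : (0 <= 4 * M ^+ 2)%R by rewrite mulr_ge0 ?sqr_ge0.
have MbQ0 t : (0 <= M * (b t * `|Q t|))%R by rewrite mulr_ge0 // ltW.
have mMbQ : measurable_fun setT (fun t => M * (b t * `|Q t|))%R.
  exact/measurable_funM/mbQ/measurable_cst.
have mMb : measurable_fun setT (fun t => 4 * M ^+ 2 * b t)%R.
  exact/measurable_funM/mb/measurable_cst.
have mhm : measurable_fun setT (fun t => Num.max (- (b t * (G t - Q t) * Q t)) 0)%R.
  exact/measurable_maxr/measurable_cst/measurable_funN.
rewrite -(integralZ_ge0 (ltW M0) mbQ bQ0) -(integralZ_ge0 M20 mb b0).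
rewrite -(integralD_ge0 mMbQ mhm MbQ0 (fun t => max0_ge0 _)).
rewrite -(integralD_ge0 (measurable_funD mMbQ mhm) mMb
  (fun t => addr_ge0 (MbQ0 t) (max0_ge0 _)) (fun t => mulr_ge0 M20 (b0 t))).
rewrite -integralZ_ge0 ?mulr_ge0 ?(ltW M0) //.
apply: le_integral_ae => //.
- exact/measurable_funM/mbQ/measurable_cst.
- exact/measurable_funD/mMb/measurable_funD.
- by move=> t; rewrite mulr_ge0 // mulr_ge0 // ltW.
- by move=> t; rewrite !addr_ge0 // mulr_ge0.
by move=> t /GM; exact: proj_amgm_le.
Qed.

Lemma weighted_orthogonal_bound :
  \int[mu]_t (b t * `|Q t|)%:E <= (2 * M)%:E * \int[mu]_t (b t)%:E.
Proof.
have hpA := positive_part_bound; have key := amgm_bound; have hpE := orth.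
set A := \int[mu]_t (b t * `|Q t|)%:E in hpA key *.
set W := \int[mu]_t (b t)%:E in key *.
set hp := \int[mu]_t (Num.max (b t * (G t - Q t) * Q t) 0)%:E in hpE hpA.
have Afin : A \is a fin_num by rewrite ge0_fin_numE // integral_ge0 // => t _; rewrite lee_fin.
have hp_fin : hp \is a fin_num.
  rewrite ge0_fin_numE ?integral_ge0 // => [|t _]; last by rewrite lee_fin.
  by apply: le_lt_trans hpA _; rewrite -(fineK Afin) -EFinM ltry.
rewrite (fin_sube_eq0 hp_fin _ hpE) in key; last first.
  by apply: integral_ge0 => t _; rewrite lee_fin.
have W0 : 0 <= W by apply: integral_ge0 => t _; rewrite lee_fin.
have [->|WnI] := eqVneq W +oo; first by rewrite gt0_muley ?leey // lte_fin mulr_gt0.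
have Wfin : W \is a fin_num by rewrite ge0_fin_numE // ltey.
rewrite -(fineK Afin) -(fineK Wfin) -(fineK hp_fin) in key hpA *.
rewrite -!EFinM -!EFinD !lee_fin in key hpA *.
have : (M * fine A <= M * (2 * M * fine W))%R by lra.
by rewrite ler_pM2l.
Qed.

Lemma weighted_projection_bound :
  \int[mu]_t (b t * `|G t - Q t|)%:E <= (3 * M)%:E * \int[mu]_t (b t)%:E.
Proof.
have mbG : measurable_fun setT (fun t => b t * `|G t|)%R.
  exact/measurable_funM/measurableT_comp.
have bG0 t : (0 <= b t * `|G t|)%R by rewrite mulr_ge0.
apply: (@le_trans _ _ (\int[mu]_t (b t * `|G t| + b t * `|Q t|)%:E)).
  apply: le_integral_ae => //.
  - exact/measurable_funM/measurableT_comp/measurable_funB.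
  - exact: measurable_funD.
  - by move=> t; rewrite mulr_ge0.
  - by move=> t; rewrite addr_ge0.
  by move=> t _; rewrite -mulrDr ler_wpM2l // ler_normB.
rewrite integralD_ge0 // (_ : 3 * M = M + 2 * M)%R; last by rewrite mulrDl mul1r.
rewrite EFinD ge0_muleDl ?lee_fin; [|exact: ltW|by rewrite mulr_ge0 // ltW].
apply: leeD; first exact: weighted_integral_bounded.
exact: weighted_orthogonal_bound.
Qed.

End orthogonal_function.
End weighted_integrals.

Section luxemburg_norm_of_balls.
Variables (R : realType) (p : R).
Hypotheses (p0 : 0 < p) (p1 : p < 1).
Local Notation to_rV k := (@to_rV R k).

(* The Luxemburg norm is nonnegative (it is 0 if no level is admissible). *)
Lemma orlicz_norm_ge0 n (f : 'rV[R]_n -> R) : 0 <= orlicz_norm p f.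
Proof.
rewrite /orlicz_norm; set S := [set l | _].
have [[l Sl]|S0] := pselect (S !=set0).
  by apply: lb_le_inf => [|y [y0 _]]; [exists l|exact: ltW].
by rewrite (_ : S = set0) ?inf0 //; apply/seteqP; split => l // Sl; apply: S0; exists l.
Qed.

Lemma indic_modular k (B : set 'rV[R]_k.+1) m lam : 0 < lam ->
  measurable (to_rV k @^-1` B) -> lebRn B = m%:E ->
  intRn (fun y => (Phi p (`|\1_B y| / lam))%:E) = (Phi p lam^-1 * m)%:E.
Proof.
move=> lam0 mB lB; have c0 : 0 <= Phi p lam^-1 by rewrite Phi_ge0 // invr_ge0 ltW.
rewrite (_ : (fun y => _) = fun y => (Phi p lam^-1 * \1_B y)%:E); last first.
  apply/funext => y; rewrite indicE; case: (y \in B).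
    by rewrite normr1 mul1r mulr1.
  by rewrite normr0 mul0r Phi0 mulr0.
rewrite intRn_lambdaR; last 2 first.
- exact/measurable_funM/indic_measurable/mB/measurable_cst.
- by move=> y; rewrite mulr_ge0.
under eq_integral do rewrite EFinM.
rewrite ge0_integralZl_EFin //; last exact/measurable_EFinP/indic_measurable.
rewrite -intRn_lambdaR; [by rewrite -/(lebRn B) lB|exact: indic_measurable|].
by move=> y; rewrite indicE.
Qed.

Lemma orlicz_norm_indic_lb k (B : set 'rV[R]_k.+1) m :
  measurable (to_rV k @^-1` B) -> lebRn B = m%:E -> 1 <= m ->
  orlicz_kappa p * m <= orlicz_norm p \1_B.
Proof.
move=> mB lB m1; have m0 : 0 < m by lra.
apply: lb_le_inf => [|l [l0]].
  exists m; split => //; rewrite (indic_modular _ mB lB) // lee_fin.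
  have Pm : Phi p m^-1 <= m^-1 by apply: Phi_le; rewrite invr_ge0 ltW.
  by have := ler_wpM2r (ltW m0) Pm; rewrite mulVf ?gt_eqF.
rewrite (indic_modular _ mB lB) // lee_fin => Hl.
by rewrite -[l]invrK; apply: Phi_modular_lb; rewrite ?invr_gt0.
Qed.

End luxemburg_norm_of_balls.

Section bounded_function_on_balls.
Variables (R : realType) (k : nat) (g : 'rV[R]_k.+1 -> R) (M : R).
Hypotheses (bg : borel_fun g) (M0 : 0 < M)
  (gM : lebRn [set y | M < `|g y|] = 0%E).
Local Notation to_rV := (@to_rV R k).
Local Notation lambda := (@lambda R k).

Let G t := g (to_rV t).
Let N := to_rV @^-1` [set y | M < `|g y|].
Let mG : measurable_fun setT G := borel_fun_measurable bg.

Let mN : measurable N.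
Proof. exact/measurable_superlevel/measurableT_comp. Qed.

Let N0 : lambda N = 0%E.
Proof. by rewrite -lebRn_lambda //; exact: mN. Qed.

Let GM t : ~ N t -> `|G t| <= M.
Proof. by rewrite /N /preimage /= ltNge => /negP/negbNE. Qed.

Section on_a_ball.
Variables (x : 'rV[R]_k.+1) (r m : R).
Hypotheses (r0 : 0 < r) (lB : lebRn (Defs.ballE x r) = m%:E).
Let B := Defs.ballE x r.
Let b t : R := \1_B (to_rV t).
Let mb : measurable_fun setT b := indic_measurable (ball_measurable x r).
Let b0 t : 0 <= b t. Proof. by rewrite /b indicE. Qed.

Let weight_integral : (\int[lambda]_t (b t)%:E)%E = m%:E.
Proof. by rewrite -lB /lebRn intRn_lambdaR //; move=> y; rewrite indicE. Qed.

Lemma ball_integral_bound : (intRn (fun y => (\1_B y * `|g y|)%:E) <= (M * m)%:E)%E.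
Proof.
rewrite intRn_lambdaR; last 2 first.
- exact/measurable_funM/measurableT_comp.
- by move=> y; rewrite mulr_ge0 // indicE.
rewrite EFinM -weight_integral.
exact: (weighted_integral_bounded M0 mN N0 mb b0 mG GM).
Qed.

Lemma ball_projection_bound d (P : 'rV[R]_k.+1 -> R) : is_projB d B g P ->
  (intRn (fun y => (\1_B y * `|g y - P y|)%:E) <= (3 * M * m)%:E)%E.
Proof.
move=> [polP /(_ P polP) orth]; have mQ := poly_measurable polP.
set Q := fun t => P (to_rV t).
have mh : measurable_fun setT (fun t => b t * (G t - Q t) * Q t).
  exact/measurable_funM/mQ/measurable_funM/measurable_funB.
have [K K0 QK] := poly_bounded_cube x r polP.
have bQfin : (\int[lambda]_t (b t * `|Q t|)%:E < +oo)%E.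
  have Kfin : (\int[lambda]_t (K * b t)%:E < +oo)%E.
    under eq_integral do rewrite EFinM.
    rewrite ge0_integralZl_EFin ?weight_integral ?ltry //; last exact/measurable_EFinP.
    by move=> t _; rewrite lee_fin.
  apply: le_lt_trans Kfin; apply: ge0_le_integral => //.
  - by move=> t _; rewrite lee_fin mulr_ge0.
  - exact/measurable_EFinP/measurable_funM/measurableT_comp.
  - exact/measurable_EFinP/measurable_funM/mb/measurable_cst.
  move=> t _; rewrite lee_fin /b indicE; case: (boolP (_ \in _)) => [/set_mem Bt|_].
    by rewrite mul1r mulr1 QK //; exact: ball_sub_cube.
  by rewrite mul0r mulr0.
move: orth; rewrite /sintRn !intRn_lambdaR; last 6 first.
- exact/measurable_funM/measurableT_comp/measurable_funB.
- by move=> y; rewrite mulr_ge0 // indicE.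
- exact: measurable_maxr (measurable_funN mh) (measurable_cst _).
- by move=> y; rewrite le_max lexx orbT.
- exact: measurable_maxr mh (measurable_cst _).
- by move=> y; rewrite le_max lexx orbT.
rewrite EFinM -weight_integral => orth.
exact: (weighted_projection_bound M0 mN N0 mb b0 mG GM mQ bQfin orth).
Qed.
End on_a_ball.

(* On balls of measure at least 1 the Luxemburg norm of the indicator
   dominates the measure, so both integrals are O(||1_B||_{L^Phi_p}). *)
Variables (p : R).
Hypotheses (p0 : 0 < p) (p1 : p < 1).

Let rescale (B : set 'rV[R]_k.+1) (X : \bar R) c m : 0 <= c ->
  measurable (to_rV @^-1` B) -> lebRn B = m%:E -> 1 <= m ->
  (X <= (c * m)%:E)%E -> (X <= (c / orlicz_kappa p * orlicz_norm p \1_B)%:E)%E.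
Proof.
move=> c0 mB lB m1 Xc; apply: le_trans Xc _; rewrite lee_fin.
have k0 := orlicz_kappa_gt0 p.
rewrite -mulrA ler_wpM2l //; rewrite ler_pdivlMl //.
exact: orlicz_norm_indic_lb.
Qed.

Lemma large_ball_integral_bound (B : set 'rV[R]_k.+1) : Defs.is_ball B -> (1 <= lebRn B)%E ->
  (intRn (fun y => (\1_B y * `|g y|)%:E) <= (M / orlicz_kappa p * orlicz_norm p \1_B)%:E)%E.
Proof.
move=> [x [r [r0 ->]]]; have [m lB] := ball_finite x r0.
rewrite lB lee_fin => m1; apply: (rescale (ltW M0) (ball_measurable x r) lB m1).
exact: ball_integral_bound lB.
Qed.

Lemma large_ball_oscillation_bound (B : set 'rV[R]_k.+1) : Defs.is_ball B -> (1 <= lebRn B)%E ->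
  (intRn (fun y => (\1_B y * `|g y - PBd (dp k.+1 p) B g y|)%:E)
     <= (3 * M / orlicz_kappa p * orlicz_norm p \1_B)%:E)%E.
Proof.
move=> [x [r [r0 ->]]]; have [m lB] := ball_finite x r0.
have M30 : 0 <= 3 * M by rewrite mulr_ge0 // ltW.
rewrite lB lee_fin => m1; apply: (rescale M30 (ball_measurable x r) lB m1).
rewrite /PBd; case: (pselect (exists P, is_projB (dp k.+1 p) (Defs.ballE x r) g P)) => [ex|nex].
  exact/ball_projection_bound/(xgetPex (fun=> 0) ex).
rewrite xgetPN => [|P projP]; last by apply: nex; exists P.
under eq_fun do rewrite subr0.
apply: le_trans (ball_integral_bound lB) _; rewrite lee_fin.
by apply: ler_wpM2r; [lra|rewrite ler_peMl ?ler1n // ltW].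
Qed.

End bounded_function_on_balls.

Lemma Linfty_pos_bound (R : realType) k (g : 'rV[R]_k.+1 -> R) : Linfty g ->
  exists2 M, 0 < M & lebRn [set y | M < `|g y|] = 0%E.
Proof.
move=> [bg [M0 gM0]]; exists (Num.max M0 1); first by rewrite lt_max ltr01 orbT.
have mlev (c : R) : measurable (@to_rV R k @^-1` [set y | c < `|g y|]).
  exact/measurable_superlevel/measurableT_comp/borel_fun_measurable.
apply/eqP; rewrite eq_le lebRn_lambda // measure_ge0 andbT -gM0 lebRn_lambda //.
apply: le_measure; rewrite ?inE // => t /=; apply: le_lt_trans.
by rewrite le_max lexx.
Qed.

Lemma orlicz_const_mono (R : realType) (p : R) n (f : 'rV[R]_n -> R) (X : \bar R) C C' :
  C <= C' -> (X <= (C * orlicz_norm p f)%:E)%E -> (X <= (C' * orlicz_norm p f)%:E)%E.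
Proof.
move=> CC' XC; apply: le_trans XC _.
by rewrite lee_fin ler_wpM2r // orlicz_norm_ge0.
Qed.

Theorem lemma4p30 (R : realType) (n : nat) (p : R) :
  (0 < n)%N -> 0 < p -> p < 1 ->
  forall g : 'rV[R]_n -> R,
    Linfty g -> (Campanato p g <-> Campanato_loc p g).
Proof.
case: n => [//|k] _ p0 p1 g gLinf.
have [M M0 gM] := Linfty_pos_bound gLinf; have bg := gLinf.1.
have K0 : M / orlicz_kappa p <= 3 * M / orlicz_kappa p.
  apply: ler_wpM2r; first by rewrite invr_ge0 ltW // orlicz_kappa_gt0.
  by rewrite ler_peMl ?ler1n // ltW.
split=> [[L1 [C HC]]|[L1 [C [Hsmall Hlarge]]]]; split=> //.
- exists (Num.max C (3 * M / orlicz_kappa p)); split=> [B bB _|B bB Bge1].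
    by apply: orlicz_const_mono (HC B bB); rewrite le_max lexx.
  apply: orlicz_const_mono (large_ball_integral_bound bg M0 gM p0 p1 bB Bge1).
  by rewrite le_max K0 orbT.
- exists (Num.max C (3 * M / orlicz_kappa p)) => B bB.
  have [Blt1|Bge1] := ltP (lebRn B) 1%E.
    by apply: orlicz_const_mono (Hsmall B bB Blt1); rewrite le_max lexx.
  apply: orlicz_const_mono (large_ball_oscillation_bound bg M0 gM p0 p1 bB Bge1).
  by rewrite le_max lexx orbT.
Qed.
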